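(* Let $\mathcal{P}=\{1,\dots,p\}$ and let $M(1),\dots,M(p)\in\mathbb{R}^{n\times n}$ be exponentially stable (Hurwitz) matrices. Let $\tau_D>0$ and $\lambda>0$. Then there exists $g_0>0$ such that for every $g\ge g_0$ there is a constant $c>0$ such that, for every switching signal $\sigma\in\mathcal{S}(\tau_D)$ and every initial condition, the solution of $\dot x=gM(\sigma(t))x$ satisfies $\|x(t)\|\le c\,e^{-\lambda t}\|x(0)\|$ for all $t\ge0$.
   Context: A switching signal is a piecewise-constant, right-continuous map $\sigma:[0,\infty)\to\mathcal{P}$ with finitely many discontinuities on each bounded interval; $\mathcal{S}(\tau_D)$ is the set of switching signals whose consecutive discontinuity times $t_1<t_2<\cdots$ (with $t_0=0$) satisfy $t_{k+1}-t_k\ge\tau_D$ for all $k\ge0$. $\|\cdot\|$ is any vector norm (with induced matrix norm). *)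

From Stdlib Require Import Reals Lra List.
Open Scope R_scope.

(* Vectors of R^n are functions nat -> R (only indices < n matter);
   n x n matrices are functions nat -> nat -> R. *)
Definition vec := nat -> R.
Definition mat := nat -> nat -> R.

Fixpoint sumR (k : nat) (f : nat -> R) : R :=
  match k with O => 0 | S k' => sumR k' f + f k' end.

Definition mulmv (n : nat) (A : mat) (x : vec) : vec :=
  fun i => sumR n (fun j => A i j * x j).

Definition scalemx (g : R) (A : mat) : mat := fun i j => g * A i j.

Definition is_norm (n : nat) (N : vec -> R) : Prop :=
  (forall x y, (forall i, (i < n)%nat -> x i = y i) -> N x = N y) /\
  (forall x, 0 <= N x) /\
  (forall x, N x = 0 -> forall i, (i < n)%nat -> x i = 0) /\
  (forall a x, N (fun i => a * x i) = Rabs a * N x) /\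
  (forall x y, N (fun i => x i + y i) <= N x + N y).

Definition right_deriv (f : R -> R) (t v : R) : Prop :=
  forall eps, 0 < eps -> exists delta, 0 < delta /\
    forall h, 0 < h < delta -> Rabs ((f (t + h) - f t) / h - v) < eps.

(* x is a solution on [0,oo) of x'(t) = A(t) x(t), with A(t) piecewise
   constant: x is continuous on (0,oo) and at every t >= 0 its right
   derivative equals A(t) x(t) (Caratheodory solution). *)
Definition is_solution (n : nat) (A : R -> mat) (x : R -> vec) : Prop :=
  forall i, (i < n)%nat ->
    (forall t, 0 < t -> continuity_pt (fun s => x s i) t) /\
    (forall t, 0 <= t -> right_deriv (fun s => x s i) t (mulmv n (A t) (x t) i)).

(* max-norm (used only to define exponential stability, which is
   norm independent) *)
Definition maxnorm (n : nat) (x : vec) : R :=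
  fold_right Rmax 0 (map (fun j => Rabs (x j)) (seq 0 n)).

Definition exp_stable (n : nat) (M : mat) : Prop :=
  exists c alpha, 0 < c /\ 0 < alpha /\
    forall x, is_solution n (fun _ => M) x ->
      forall t, 0 <= t -> maxnorm n (x t) <= c * exp (- alpha * t) * maxnorm n (x 0).

Definition dwell_signal (tauD : R) (p : nat) (sigma : R -> nat) : Prop :=
  (forall s, 0 <= s -> (1 <= sigma s <= p)%nat) /\
  exists tk : nat -> R, tk O = 0 /\
    (forall k, tk (S k) - tk k >= tauD) /\
    (forall k s, tk k <= s < tk (S k) -> sigma s = sigma (tk k)).

From Stdlib Require Import Reals Lra Lia List ClassicalEpsilon Classical.
From Coquelicot Require Import Coquelicot.
Open Scope R_scope.

(* Rescaling time by g turns a bound C e^{-al t} for the solutions of x' = M x into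
   C e^{-al g t} for those of x' = g M x.  On a dwell interval of length L >= tauD the
   overshoot C is absorbed once C e^{-al g L} <= e^{-lam L}, which holds for all large g;
   chaining the intervals gives the rate e^{-lam t} at the switching times, and inside an
   interval one loses at most the factor C.  Stability is measured in the max-norm, and
   the equivalence of norms on R^n transfers the bound to the given norm. *)

Lemma sumR_ext m f g : (forall j, (j < m)%nat -> f j = g j) -> sumR m f = sumR m g.
Proof.
  induction m as [|m IH]; intros H; simpl; [reflexivity|].
  f_equal; [apply IH; intros; apply H|apply H]; lia.
Qed.

Lemma sumR_le m f g : (forall j, (j < m)%nat -> f j <= g j) -> sumR m f <= sumR m g.
Proof.
  induction m as [|m IH]; intros H; simpl; [lra|].
  apply Rplus_le_compat; [apply IH; intros; apply H|apply H]; lia.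
Qed.

Lemma sumR_ge0 m f : (forall j, (j < m)%nat -> 0 <= f j) -> 0 <= sumR m f.
Proof.
  induction m as [|m IH]; intros H; simpl; [lra|].
  assert (0 <= f m) by (apply H; lia). assert (0 <= sumR m f) by (apply IH; intros; apply H; lia).
  lra.
Qed.

Lemma sumR_mult_l m c f : sumR m (fun j => c * f j) = c * sumR m f.
Proof. induction m as [|m IH]; simpl; [|rewrite IH]; ring. Qed.

Lemma Rabs_sumR_le m f : Rabs (sumR m f) <= sumR m (fun j => Rabs (f j)).
Proof.
  induction m as [|m IH]; simpl; [rewrite Rabs_R0; lra|].
  eapply Rle_trans; [apply Rabs_triang|lra].
Qed.

Lemma le_sumR_term m f j :
  (forall j, (j < m)%nat -> 0 <= f j) -> (j < m)%nat -> f j <= sumR m f.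
Proof.
  induction m as [|m IH]; intros H Hj; simpl; [lia|].
  destruct (Nat.eq_dec j m) as [->|Hne].
  - assert (0 <= sumR m f) by (apply sumR_ge0; intros; apply H; lia). lra.
  - assert (f j <= sumR m f) by (apply IH; [intros; apply H|]; lia).
    assert (0 <= f m) by (apply H; lia). lra.
Qed.

Lemma fold_Rmax_spec (a : nat -> R) (l : list nat) :
  0 <= fold_right Rmax 0 (map a l) /\
  (forall j, In j l -> a j <= fold_right Rmax 0 (map a l)) /\
  (forall r, 0 <= r -> (forall j, In j l -> a j <= r) -> fold_right Rmax 0 (map a l) <= r).
Proof.
  induction l as [|i l (IH0 & IH1 & IH2)]; simpl.
  - repeat split; intros; [lra|tauto|lra].
  - repeat split.
    + eapply Rle_trans; [apply IH0|apply Rmax_r].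
    + intros j [<-|Hj]; [apply Rmax_l|eapply Rle_trans; [apply IH1, Hj|apply Rmax_r]].
    + intros r Hr Hl. apply Rmax_lub; auto.
Qed.

Lemma maxnorm_spec n (v : vec) :
  0 <= maxnorm n v /\
  (forall j, (j < n)%nat -> Rabs (v j) <= maxnorm n v) /\
  (forall r, 0 <= r -> (forall j, (j < n)%nat -> Rabs (v j) <= r) -> maxnorm n v <= r).
Proof.
  destruct (fold_Rmax_spec (fun j => Rabs (v j)) (seq 0 n)) as (H0 & H1 & H2).
  repeat split; [exact H0| |].
  - intros j Hj. apply H1, in_seq. lia.
  - intros r Hr H. apply H2; [exact Hr|]. intros j Hj%in_seq. apply H. lia.
Qed.

Lemma maxnorm_ge0 n v : 0 <= maxnorm n v.
Proof. apply maxnorm_spec. Qed.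

Lemma Rabs_le_maxnorm n v j : (j < n)%nat -> Rabs (v j) <= maxnorm n v.
Proof. apply maxnorm_spec. Qed.

Lemma maxnorm_le n v r :
  0 <= r -> (forall j, (j < n)%nat -> Rabs (v j) <= r) -> maxnorm n v <= r.
Proof. apply maxnorm_spec. Qed.

Lemma maxnorm_ext n v w : (forall j, (j < n)%nat -> v j = w j) -> maxnorm n v = maxnorm n w.
Proof.
  intros H. apply Rle_antisym; apply maxnorm_le; try apply maxnorm_ge0;
    intros j Hj; [rewrite H|rewrite <- H]; auto using Rabs_le_maxnorm.
Qed.

Lemma exp_le_compat x y : x <= y -> exp x <= exp y.
Proof. intros [H| ->]; [left; apply exp_increasing|]; lra. Qed.

Lemma inv_succ_eventually_lt eps :
  0 < eps -> exists K, forall k, (K <= k)%nat -> / (INR k + 1) < eps.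
Proof.
  intros Heps. destruct (INR_unbounded (/ eps)) as [K HK]. exists K. intros k Hk.
  assert (INR K <= INR k) by (apply le_INR; lia).
  assert (0 < / eps) by (apply Rinv_0_lt_compat; lra).
  rewrite <- (Rinv_inv eps). apply Rinv_lt_contravar; [apply Rmult_lt_0_compat|]; lra.
Qed.

Lemma le_of_le_add_inv_succ a b d : (forall k, a <= b + d * / (INR k + 1)) -> a <= b.
Proof.
  intros H. destruct (Rle_dec a b) as [|Hab]; [assumption|exfalso].
  destruct (Rle_dec d 0) as [Hd|Hd].
  - specialize (H O). assert (0 < / (INR 0 + 1)) by apply RinvN_pos. nra.
  - destruct (inv_succ_eventually_lt ((a - b) / d)) as [K HK].
    { apply Rdiv_lt_0_compat; lra. }
    specialize (HK K (le_n K)). specialize (H K).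
    assert (d * / (INR K + 1) < a - b); [|lra].
    apply Rmult_lt_compat_l with (r := d) in HK; [|lra].
    unfold Rdiv in HK. rewrite (Rmult_comm (a - b)), <- Rmult_assoc, Rinv_r, Rmult_1_l in HK; lra.
Qed.
Lemma Rabs_lim_le (u : nat -> R) L b c d :
  Un_cv u L -> (forall l, Rabs (u l - b) <= c + d * / (INR l + 1)) -> Rabs (L - b) <= c.
Proof.
  intros Hu Hb. apply (le_of_le_add_inv_succ _ _ (1 + Rabs d)). intros k.
  destruct (Hu (/ (INR k + 1)) (RinvN_pos k)) as [K HK].
  set (l := (K + k)%nat).
  assert (Hl : Rabs (u l - L) < / (INR k + 1)) by (apply HK; unfold l; lia).
  assert (Hlk : / (INR l + 1) <= / (INR k + 1)).
  { apply Rinv_le_contravar; [generalize (pos_INR k); lra|].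
    apply Rplus_le_compat_r, le_INR. unfold l; lia. }
  assert (d * / (INR l + 1) <= Rabs d * / (INR k + 1)).
  { eapply Rle_trans; [apply Rle_abs|]. rewrite Rabs_mult, (Rabs_right (/ _)).
    - apply Rmult_le_compat_l; [apply Rabs_pos|assumption].
    - left; apply RinvN_pos. }
  assert (Rabs (L - b) <= Rabs (u l - L) + Rabs (u l - b)).
  { replace (L - b) with (- (u l - L) + (u l - b)) by ring.
    eapply Rle_trans; [apply Rabs_triang|]. rewrite Rabs_Ropp. lra. }
  specialize (Hb l). lra.
Qed.

Lemma coordwise_limit (w : nat -> vec) D :
  0 <= D ->
  (forall k l j, Rabs (w l j - w k j) <= D * (/ (INR k + 1) + / (INR l + 1))) ->
  exists L : vec, forall k j, Rabs (L j - w k j) <= D * / (INR k + 1).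
Proof.
  intros HD Hw.
  assert (Hcauchy : forall j, Cauchy_crit (fun k => w k j)).
  { intros j eps Heps.
    set (e := eps / (2 * D + 1)).
    assert (He : 0 < e) by (apply Rdiv_lt_0_compat; lra).
    assert (Ee : (2 * D + 1) * e = eps) by (unfold e; field; lra).
    destruct (inv_succ_eventually_lt e He) as [K HK].
    exists K. intros a b Ha Hb. unfold R_dist.
    eapply Rle_lt_trans; [apply Hw|].
    generalize (HK a Ha) (HK b Hb); intros.
    assert (D * / (INR a + 1) <= D * e) by (apply Rmult_le_compat_l; lra).
    assert (D * / (INR b + 1) <= D * e) by (apply Rmult_le_compat_l; lra).
    nra. }
  destruct (choice (fun j l => Un_cv (fun k => w k j) l))
    as [L HL]; [intros j; destruct (Rcomplete.R_complete _ (Hcauchy j)) as [l Hl]; now exists l|].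
  exists L. intros k j. apply (Rabs_lim_le _ _ _ _ D (HL j)). intros l.
  rewrite <- Rmult_plus_distr_l. apply Hw.
Qed.

(** * Equivalence of norms *)

Definition unit_vec (m : nat) : vec := fun i => if Nat.eq_dec i m then 1 else 0.

Definition supported_below (m : nat) (v : vec) : Prop := forall j, (m <= j)%nat -> v j = 0.

Definition truncate (m : nat) (v : vec) : vec := fun i => if Nat.ltb i m then v i else 0.

Lemma truncate_supported m v : supported_below m (truncate m v).
Proof. intros j Hj. unfold truncate. destruct (Nat.ltb_spec j m); [lia|reflexivity]. Qed.

Lemma truncate_eq m v i : (i < m)%nat -> truncate m v i = v i.
Proof. intros Hi. unfold truncate. destruct (Nat.ltb_spec i m); [reflexivity|lia]. Qed.

Section NormEquivalence.

Variables (n : nat) (N : vec -> R).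
Hypothesis HN : is_norm n N.

Lemma norm_ext x y : (forall i, (i < n)%nat -> x i = y i) -> N x = N y.
Proof. apply HN. Qed.

Lemma norm_ge0 x : 0 <= N x.
Proof. apply HN. Qed.

Lemma norm_eq0 x : N x = 0 -> forall i, (i < n)%nat -> x i = 0.
Proof. apply HN. Qed.

Lemma normZ a x : N (fun i => a * x i) = Rabs a * N x.
Proof. apply HN. Qed.

Lemma normD_le x y : N (fun i => x i + y i) <= N x + N y.
Proof. apply HN. Qed.

Lemma normB_le x y : N (fun i => x i - y i) <= N x + N y.
Proof.
  rewrite (norm_ext _ (fun i => x i + (fun i => -1 * y i) i)) by (intros; ring).
  eapply Rle_trans; [apply normD_le|]. rewrite normZ, Rabs_left by lra. lra.
Qed.

Definition unit_norm_sum : R := sumR n (fun j => N (unit_vec j)).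

Lemma unit_norm_sum_ge0 : 0 <= unit_norm_sum.
Proof. apply sumR_ge0; intros; apply norm_ge0. Qed.

Lemma norm_supported_le m v :
  supported_below m v -> N v <= sumR m (fun j => Rabs (v j) * N (unit_vec j)).
Proof.
  revert v; induction m as [|m IH]; intros v Hv; simpl.
  - rewrite (norm_ext _ (fun i => 0 * v i)) by (intros i _; rewrite Hv; lia || ring).
    rewrite normZ, Rabs_R0. lra.
  - set (v' := fun i => if Nat.eq_dec i m then 0 else v i).
    assert (Hv' : supported_below m v').
    { intros j Hj. unfold v'. destruct (Nat.eq_dec j m); [reflexivity|apply Hv; lia]. }
    rewrite (norm_ext v (fun i => v' i + (fun i => v m * unit_vec m i) i)).
    + eapply Rle_trans; [apply normD_le|]. rewrite normZ.
      apply Rplus_le_compat_r. eapply Rle_trans; [apply IH, Hv'|].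
      apply Req_le, sumR_ext. intros j Hj. unfold v'.
      destruct (Nat.eq_dec j m); [lia|reflexivity].
    + intros i _. unfold v', unit_vec. destruct (Nat.eq_dec i m) as [->|]; ring.
Qed.

Lemma norm_le_coord_bound v r :
  (forall j, (j < n)%nat -> Rabs (v j) <= r) -> N v <= r * unit_norm_sum.
Proof.
  intros Hr. rewrite (norm_ext v (truncate n v)) by (intros; symmetry; now apply truncate_eq).
  eapply Rle_trans; [apply (norm_supported_le n), truncate_supported|].
  unfold unit_norm_sum. rewrite <- sumR_mult_l. apply sumR_le. intros j Hj.
  rewrite truncate_eq by assumption. apply Rmult_le_compat_r; [apply norm_ge0|auto].
Qed.

Lemma norm_le_maxnorm v : N v <= unit_norm_sum * maxnorm n v.
Proof. rewrite Rmult_comm. apply norm_le_coord_bound. intros; now apply Rabs_le_maxnorm. Qed.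

Definition coord_bounded (m : nat) (D : R) : Prop :=
  forall v, supported_below m v -> forall j, (j < m)%nat -> Rabs (v j) <= D * N v.

(* The completeness of R enters here: near-minimizers converge to a vector [L]
   with [N (L + e_m) = 0]. *)
Lemma unit_vec_dist_pos m D :
  (m < n)%nat -> 0 < D -> coord_bounded m D ->
  exists c, 0 < c /\ forall w, supported_below m w -> c <= N (fun i => w i + unit_vec m i).
Proof.
  intros Hm HD Hbound. apply NNPP. intros Hno.
  assert (Hnear : forall k : nat, exists w, supported_below m w /\
                   N (fun i => w i + unit_vec m i) < / (INR k + 1)).
  { intros k. apply NNPP. intros Hk. apply Hno. exists (/ (INR k + 1)).
    split; [apply RinvN_pos|]. intros w Hw. apply Rnot_lt_le. intros Hlt. apply Hk.
    now exists w. }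
  destruct (choice _ Hnear) as [w Hw].
  assert (Hclose : forall k l j, Rabs (w l j - w k j) <= D * (/ (INR k + 1) + / (INR l + 1))).
  { intros k l j. destruct (Hw k) as [Hsk Hnk], (Hw l) as [Hsl Hnl].
    destruct (Compare_dec.le_lt_dec m j) as [Hj|Hj].
    - rewrite Hsk, Hsl, Rminus_0_r, Rabs_R0 by assumption.
      generalize (RinvN_pos k) (RinvN_pos l); intros. nra.
    - eapply Rle_trans.
      { apply (Hbound (fun i => w l i - w k i)); [|exact Hj].
        intros i Hi. rewrite Hsk, Hsl by assumption. ring. }
      apply Rmult_le_compat_l; [lra|].
      rewrite (norm_ext _ (fun i => (fun i => w l i + unit_vec m i) i - (w k i + unit_vec m i)))
        by (intros; ring).
      eapply Rle_trans; [apply normB_le|lra]. }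
  destruct (coordwise_limit w D ltac:(lra) Hclose) as [L HL].
  assert (HLm : L m = 0).
  { apply Rabs_eq_0, Rle_antisym; [|apply Rabs_pos].
    apply (le_of_le_add_inv_succ _ 0 D). intros k.
    specialize (HL k m). rewrite (proj1 (Hw k) m), Rminus_0_r in HL by lia. lra. }
  assert (HLnorm : N (fun i => L i + unit_vec m i) = 0).
  { apply Rle_antisym; [|apply norm_ge0].
    apply (le_of_le_add_inv_succ _ 0 (1 + D * unit_norm_sum)). intros k.
    rewrite (norm_ext _ (fun i => (fun i => w k i + unit_vec m i) i + (fun i => L i - w k i) i))
      by (intros; ring).
    eapply Rle_trans; [apply normD_le|].
    assert (N (fun i => L i - w k i) <= D * / (INR k + 1) * unit_norm_sum)
      by (apply norm_le_coord_bound; intros; apply HL).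
    destruct (Hw k) as [_ Hk]. lra. }
  specialize (norm_eq0 _ HLnorm m Hm). simpl. rewrite HLm. unfold unit_vec.
  destruct (Nat.eq_dec m m); [lra|congruence].
Qed.

Lemma coord_bounded_succ m D c :
  0 < D -> 0 < c -> coord_bounded m D ->
  (forall w, supported_below m w -> c <= N (fun i => w i + unit_vec m i)) ->
  coord_bounded (S m) (D * (1 + N (unit_vec m) / c) + / c).
Proof.
  intros HD Hc Hbound Hgap v Hv. set (a := v m).
  assert (Hc' : 0 < / c) by (apply Rinv_0_lt_compat, Hc).
  assert (He := norm_ge0 (unit_vec m)). assert (HNv := norm_ge0 v).
  assert (Ha : Rabs a <= N v / c).
  { apply Rmult_le_reg_r with c; [exact Hc|]. unfold Rdiv.
    rewrite Rmult_assoc, Rinv_l, Rmult_1_r by lra.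
    destruct (Req_dec a 0) as [Ha0|Ha0]; [rewrite Ha0, Rabs_R0; lra|].
    set (w := fun i => if Nat.eq_dec i m then 0 else v i / a).
    rewrite (norm_ext v (fun i => a * (fun i => w i + unit_vec m i) i)), normZ.
    - apply Rmult_le_compat_l; [apply Rabs_pos|]. apply Hgap.
      intros j Hj. unfold w. destruct (Nat.eq_dec j m); [reflexivity|].
      rewrite Hv by lia. unfold Rdiv. ring.
    - intros i _. unfold w, unit_vec. destruct (Nat.eq_dec i m) as [->|]; [fold a; ring|].
      field. exact Ha0. }
  assert (HD' : N v / c <= (D * (1 + N (unit_vec m) / c) + / c) * N v).
  { unfold Rdiv. assert (0 <= D * (1 + N (unit_vec m) * / c) * N v); [|nra].
    apply Rmult_le_pos; [apply Rmult_le_pos|]; [lra| |lra].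
    assert (0 <= N (unit_vec m) * / c) by (apply Rmult_le_pos; lra). lra. }
  intros j Hj. destruct (Nat.eq_dec j m) as [->|Hjm]; [fold a; lra|].
  set (u := fun i => v i - a * unit_vec m i).
  assert (Hu : supported_below m u).
  { intros i Hi. unfold u, unit_vec, a. destruct (Nat.eq_dec i m) as [->|]; [ring|].
    rewrite Hv by lia. ring. }
  replace (v j) with (u j) by (unfold u, unit_vec; destruct (Nat.eq_dec j m); [lia|ring]).
  eapply Rle_trans; [apply Hbound; [exact Hu|lia]|].
  assert (N u <= N v + Rabs a * N (unit_vec m)).
  { rewrite <- normZ. apply (normB_le v (fun i => a * unit_vec m i)). }
  assert (Rabs a * N (unit_vec m) <= N v / c * N (unit_vec m))
    by (apply Rmult_le_compat_r; [exact He|exact Ha]).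
  assert (0 <= / c * N v) by (apply Rmult_le_pos; lra).
  assert (D * N u <= D * (1 + N (unit_vec m) / c) * N v); [|lra].
  rewrite Rmult_assoc. apply Rmult_le_compat_l; [lra|]. unfold Rdiv in *. lra.
Qed.

Lemma maxnorm_le_norm : exists D, 0 < D /\ forall v, maxnorm n v <= D * N v.
Proof.
  assert (Hind : forall m, (m <= n)%nat -> exists D, 0 < D /\ coord_bounded m D).
  { induction m as [|m IH]; intros Hm.
    - exists 1. split; [lra|]. intros v _ j Hj. lia.
    - destruct IH as [D [HD Hbound]]; [lia|].
      destruct (unit_vec_dist_pos m D ltac:(lia) HD Hbound) as [c [Hc Hgap]].
      eexists; split; [|exact (coord_bounded_succ m D c HD Hc Hbound Hgap)].
      assert (0 < / c) by (apply Rinv_0_lt_compat, Hc).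
      assert (0 <= N (unit_vec m) / c) by (apply Rdiv_le_0_compat; [apply norm_ge0|lra]).
      nra. }
  destruct (Hind n (le_n n)) as [D [HD Hbound]]. exists D. split; [exact HD|]. intros v.
  rewrite (maxnorm_ext n v (truncate n v)), (norm_ext v (truncate n v))
    by (intros; symmetry; now apply truncate_eq).
  apply maxnorm_le; [apply Rmult_le_pos; [lra|apply norm_ge0]|].
  apply Hbound, truncate_supported.
Qed.

End NormEquivalence.

(** * The exponential of a matrix *)

Fixpoint powmv (n : nat) (A : mat) (k : nat) (v : vec) : vec :=
  match k with O => v | S k => mulmv n A (powmv n A k v) end.

Definition expmv_coef n A v i k : R := powmv n A k v i / INR (Factorial.fact k).

(* [expmv n A v u] is [exp (u A) v], coordinatewise as a power series in [u]. *)
Definition expmv n A v (u : R) : vec := fun i => PSeries (expmv_coef n A v i) u.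

Definition entry_abs_sum n (A : mat) : R := sumR n (fun i => sumR n (fun j => Rabs (A i j))).

Lemma entry_abs_sum_ge0 n A : 0 <= entry_abs_sum n A.
Proof. apply sumR_ge0; intros; apply sumR_ge0; intros; apply Rabs_pos. Qed.

Lemma Rabs_powmv_le n A v k i :
  (i < n)%nat -> Rabs (powmv n A k v i) <= maxnorm n v * entry_abs_sum n A ^ k.
Proof.
  set (K := entry_abs_sum n A). set (r := maxnorm n v).
  assert (HK : 0 <= K) by apply entry_abs_sum_ge0. assert (Hr : 0 <= r) by apply maxnorm_ge0.
  revert i; induction k as [|k IH]; intros i Hi; simpl.
  - rewrite Rmult_1_r. now apply Rabs_le_maxnorm.
  - assert (Hrow : sumR n (fun j => Rabs (A i j)) <= K).
    { apply (le_sumR_term n (fun i => sumR n (fun j => Rabs (A i j)))); [|exact Hi].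
      intros; apply sumR_ge0; intros; apply Rabs_pos. }
    assert (Hpow : 0 <= r * K ^ k) by (apply Rmult_le_pos; [|apply pow_le]; assumption).
    unfold mulmv. eapply Rle_trans; [apply Rabs_sumR_le|].
    eapply Rle_trans.
    { apply (sumR_le _ _ (fun j => (r * K ^ k) * Rabs (A i j))). intros j Hj.
      rewrite Rabs_mult, Rmult_comm. apply Rmult_le_compat_r; [apply Rabs_pos|auto]. }
    rewrite sumR_mult_l.
    replace (r * (K * K ^ k)) with ((r * K ^ k) * K) by ring.
    apply Rmult_le_compat_l; assumption.
Qed.

Lemma expmv_coef_disk n A v i x : (i < n)%nat -> CV_disk (expmv_coef n A v i) x.
Proof.
  intros Hi. set (K := entry_abs_sum n A). set (r := maxnorm n v).
  apply (ex_series_le (V := R_CompleteNormedModule) _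
           (fun k => r * (/ INR (Factorial.fact k) * (K * Rabs x) ^ k))).
  - intros k. change (norm (Rabs (expmv_coef n A v i k * x ^ k)))
      with (Rabs (Rabs (expmv_coef n A v i k * x ^ k))).
    rewrite Rabs_Rabsolu. unfold expmv_coef.
    rewrite Rabs_mult, Rabs_div, <- RPow_abs by apply INR_fact_neq_0.
    rewrite (Rabs_right (INR (Factorial.fact k))) by (apply Rle_ge, pos_INR).
    rewrite Rpow_mult_distr.
    assert (Rabs (powmv n A k v i) <= r * K ^ k) by (apply Rabs_powmv_le, Hi).
    assert (0 < / INR (Factorial.fact k)) by (apply Rinv_0_lt_compat, INR_fact_lt_0).
    assert (0 <= Rabs x ^ k) by (apply pow_le, Rabs_pos).
    unfold Rdiv.
    replace (r * (/ INR (Factorial.fact k) * (K ^ k * Rabs x ^ k)))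
      with (r * K ^ k * / INR (Factorial.fact k) * Rabs x ^ k) by ring.
    apply Rmult_le_compat_r; [assumption|]. apply Rmult_le_compat_r; lra.
  - apply (ex_series_scal (K := R_AbsRing) (V := R_NormedModule) r).
    exists (exp (K * Rabs x)). generalize (is_exp_Reals (K * Rabs x)).
    apply is_series_ext. intros k. rewrite pow_n_pow. apply Rmult_comm.
Qed.

Lemma expmv_coef_radius n A v i x :
  (i < n)%nat -> Rbar_lt (Rabs x) (CV_radius (expmv_coef n A v i)).
Proof.
  intros Hi.
  assert (H := proj1 (Lub_Rbar_correct (CV_disk (expmv_coef n A v i)))
                 (Rabs x + 1) (expmv_coef_disk n A v i _ Hi)).
  unfold CV_radius. destruct (Lub_Rbar (CV_disk (expmv_coef n A v i))); simpl in *; auto. lra.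
Qed.

Lemma PS_derive_expmv_coef n A v i k :
  PS_derive (expmv_coef n A v i) k = sumR n (fun j => A i j * expmv_coef n A v j k).
Proof.
  unfold PS_derive, expmv_coef. simpl powmv. unfold mulmv.
  rewrite (sumR_ext _ (fun j => A i j * (powmv n A k v j / INR (Factorial.fact k)))
             (fun j => / INR (Factorial.fact k) * (A i j * powmv n A k v j)))
    by (intros; unfold Rdiv; ring).
  rewrite sumR_mult_l. change (Factorial.fact (S k)) with (S k * Factorial.fact k)%nat.
  rewrite mult_INR. field. split; [apply INR_fact_neq_0|apply not_0_INR; lia].
Qed.

Lemma PSeries_sumR n A v i u m : (m <= n)%nat ->
  ex_pseries (fun k => sumR m (fun j => A i j * expmv_coef n A v j k)) u /\
  PSeries (fun k => sumR m (fun j => A i j * expmv_coef n A v j k)) u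
    = sumR m (fun j => A i j * expmv n A v u j).
Proof.
  induction m as [|m IH]; intros Hm; simpl.
  - split; [|apply PSeries_const_0].
    apply (ex_pseries_ext (fun _ => 0)); [reflexivity|].
    apply CV_radius_inside. rewrite CV_radius_const_0. exact I.
  - destruct IH as [Hex Hsum]; [lia|].
    assert (Hm' : ex_pseries (PS_scal (A i m) (expmv_coef n A v m)) u).
    { apply ex_pseries_scal; [apply Rmult_comm|].
      apply CV_disk_correct, expmv_coef_disk. lia. }
    split; [exact (ex_pseries_plus _ _ _ Hex Hm')|].
    rewrite <- Hsum. unfold expmv. rewrite <- (PSeries_scal (A i m) (expmv_coef n A v m) u).
    rewrite <- PSeries_plus; auto.
Qed.

Lemma expmv_derive n A v i u : (i < n)%nat ->
  derivable_pt_lim (fun s => expmv n A v s i) u (mulmv n A (expmv n A v u) i).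
Proof.
  intros Hi. apply is_derive_Reals.
  replace (mulmv n A (expmv n A v u) i) with (PSeries (PS_derive (expmv_coef n A v i)) u).
  - apply is_derive_PSeries, expmv_coef_radius, Hi.
  - rewrite (PSeries_ext _ _ _ (PS_derive_expmv_coef n A v i)).
    apply (PSeries_sumR n A v i u n), le_n.
Qed.

Lemma expmv_continuous n A v i u : (i < n)%nat -> continuity_pt (fun s => expmv n A v s i) u.
Proof. intros Hi. apply derivable_continuous_pt. eexists. now apply expmv_derive. Qed.

Lemma expmv_0 n A v i : expmv n A v 0 i = v i.
Proof. unfold expmv. rewrite PSeries_0. unfold expmv_coef. simpl. field. Qed.

(** * Solutions on one dwell interval *)

Lemma right_deriv_of_derivable f t l : derivable_pt_lim f t l -> right_deriv f t l.
Proof.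
  intros H eps Heps. destruct (H eps Heps) as [d Hd]. exists d. split; [apply cond_pos|].
  intros h Hh. apply Hd; [lra|]. rewrite Rabs_right; lra.
Qed.

Lemma right_deriv_local f h t v d :
  0 < d -> (forall s, t <= s < t + d -> f s = h s) -> right_deriv h t v -> right_deriv f t v.
Proof.
  intros Hd Hfh Hh eps Heps. destruct (Hh eps Heps) as [d' [Hd' Hh']].
  exists (Rmin d d'). split; [now apply Rmin_pos|]. intros k Hk.
  generalize (Rmin_l d d') (Rmin_r d d'); intros.
  rewrite !Hfh by lra. apply Hh'. lra.
Qed.

Lemma right_deriv_rescale f a g t v :
  0 < g -> right_deriv f (a + t / g) v -> right_deriv (fun s => f (a + s / g)) t (v / g).
Proof.
  intros Hg Hf eps Heps. destruct (Hf (eps * g) ltac:(nra)) as [d [Hd Hfd]].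
  exists (g * d). split; [nra|]. intros h Hh.
  assert (Hhg : 0 < h / g < d).
  { split; [apply Rdiv_lt_0_compat; lra|]. apply Rmult_lt_reg_r with g; [exact Hg|].
    unfold Rdiv. rewrite Rmult_assoc, Rinv_l by lra. lra. }
  specialize (Hfd _ Hhg). replace (a + (t + h) / g) with (a + t / g + h / g) by (field; lra).
  replace ((f (a + t / g + h / g) - f (a + t / g)) / h - v / g)
    with (((f (a + t / g + h / g) - f (a + t / g)) / (h / g) - v) / g) by (field; lra).
  unfold Rdiv at 1. rewrite Rabs_mult, Rabs_inv, (Rabs_right g) by lra.
  apply Rmult_lt_reg_r with g; [exact Hg|]. rewrite Rmult_assoc, Rinv_l by lra. lra.
Qed.

Lemma right_deriv_shift f U t v :
  right_deriv f (t - U) v -> right_deriv (fun s => f (s - U)) t v.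
Proof.
  intros Hf eps Heps. destruct (Hf eps Heps) as [d [Hd Hfd]]. exists d. split; [exact Hd|].
  intros h Hh. replace (t + h - U) with (t - U + h) by ring. now apply Hfd.
Qed.

Lemma continuity_pt_glue (f h : R -> R) t :
  continuity_pt f t -> continuity_pt h t -> f t = h t ->
  continuity_pt (fun s => if Rlt_dec s t then f s else h s) t.
Proof.
  intros Hf Hh Ht eps Heps.
  destruct (Hf eps Heps) as [d1 [Hd1 H1]], (Hh eps Heps) as [d2 [Hd2 H2]].
  exists (Rmin d1 d2). split; [now apply Rmin_pos|]. intros s [Hst Hs]. simpl in *.
  generalize (Rmin_l d1 d2) (Rmin_r d1 d2); intros.
  destruct (Rlt_dec t t) as [Htt|_]; [lra|].
  destruct (Rlt_dec s t).
  - rewrite <- Ht. apply H1. split; [exact Hst|lra].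
  - apply H2. split; [exact Hst|lra].
Qed.

Definition stable_with (n : nat) (A : mat) (C al : R) : Prop :=
  forall y, is_solution n (fun _ => A) y ->
    forall t, 0 <= t -> maxnorm n (y t) <= C * exp (- al * t) * maxnorm n (y 0).

Section GluedSolution.

Variables (n : nat) (A : mat) (x : R -> vec) (a g U : R).
Hypotheses (Ha : 0 <= a) (Hg : 0 < g).
Hypothesis Hcont : forall i, (i < n)%nat -> forall t, 0 < t -> continuity_pt (fun s => x s i) t.
Hypothesis Hderiv : forall i, (i < n)%nat -> forall t, a <= t < a + U / g ->
  right_deriv (fun s => x s i) t (g * mulmv n A (x t) i).

(* [x] on [a, a + U/g] slowed down to [x' = A x] on [0, U], then continued by [exp]: a solution
   of the single mode on all of [0, oo), so exponential stability of the mode applies to it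
   without any uniqueness theorem. *)
Definition glued (u : R) : vec :=
  if Rlt_dec u U then x (a + u / g) else expmv n A (x (a + U / g)) (u - U).

Lemma glued_continuous i u : (i < n)%nat -> 0 < u -> continuity_pt (fun s => glued s i) u.
Proof.
  intros Hi Hu.
  assert (Hx : forall s, 0 < s -> continuity_pt (fun s => x (a + s / g) i) s).
  { intros s Hs. apply (continuity_pt_comp (fun s => a + s / g) (fun t => x t i)); [reg|].
    apply Hcont; [exact Hi|]. assert (0 < s / g) by (apply Rdiv_lt_0_compat; lra). lra. }
  assert (He : forall s, continuity_pt (fun s => expmv n A (x (a + U / g)) (s - U) i) s).
  { intros s. apply (continuity_pt_comp (fun s => s - U) (fun w => expmv n A _ w i)); [reg|].
    now apply expmv_continuous. }
  destruct (Rtotal_order u U) as [Hlt|[->|Hgt]].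
  - apply continuity_pt_locally_ext with (f := fun s => x (a + s / g) i) (a := U - u);
      [lra| |now apply Hx].
    intros s Hs. unfold glued. apply Rabs_def2 in Hs. destruct (Rlt_dec s U); [reflexivity|lra].
  - apply continuity_pt_locally_ext with (a := 1)
      (f := fun s => if Rlt_dec s U then x (a + s / g) i
                     else expmv n A (x (a + U / g)) (s - U) i); [lra| |].
    { intros s _. unfold glued. now destruct (Rlt_dec s U). }
    apply continuity_pt_glue; [now apply Hx|apply He|].
    rewrite Rminus_diag. symmetry. apply expmv_0.
  - apply continuity_pt_locally_ext
      with (f := fun s => expmv n A (x (a + U / g)) (s - U) i) (a := u - U); [lra| |apply He].
    intros s Hs. unfold glued. apply Rabs_def2 in Hs. destruct (Rlt_dec s U); [lra|reflexivity].
Qed.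

Lemma glued_right_deriv i u : (i < n)%nat -> 0 <= u ->
  right_deriv (fun s => glued s i) u (mulmv n A (glued u) i).
Proof.
  intros Hi Hu. unfold glued at 2. destruct (Rlt_dec u U) as [Hlt|Hge].
  - apply (right_deriv_local _ (fun s => x (a + s / g) i) _ _ (U - u)); [lra| |].
    { intros s Hs. unfold glued. destruct (Rlt_dec s U); [reflexivity|lra]. }
    replace (mulmv n A (x (a + u / g)) i) with (g * mulmv n A (x (a + u / g)) i / g)
      by (field; lra).
    apply (right_deriv_rescale (fun t => x t i)); [exact Hg|]. apply Hderiv; [exact Hi|].
    assert (0 <= u / g) by (apply Rdiv_le_0_compat; lra).
    assert (u / g < U / g) by (apply Rmult_lt_compat_r; [apply Rinv_0_lt_compat|]; lra). lra.
  - apply (right_deriv_local _ (fun s => expmv n A (x (a + U / g)) (s - U) i) _ _ 1); [lra| |].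
    { intros s Hs. unfold glued. destruct (Rlt_dec s U); [lra|reflexivity]. }
    apply right_deriv_shift, right_deriv_of_derivable, expmv_derive, Hi.
Qed.

Lemma glued_solution : is_solution n (fun _ => A) glued.
Proof.
  intros i Hi. split; intros u Hu; [now apply glued_continuous|now apply glued_right_deriv].
Qed.

End GluedSolution.

Lemma maxnorm_decay_on_interval n A C al (x : R -> vec) a b g :
  0 <= a -> a <= b -> 0 < g -> stable_with n A C al ->
  (forall i, (i < n)%nat -> forall t, 0 < t -> continuity_pt (fun s => x s i) t) ->
  (forall i, (i < n)%nat -> forall t, a <= t < b ->
     right_deriv (fun s => x s i) t (g * mulmv n A (x t) i)) ->
  forall s, a <= s <= b -> maxnorm n (x s) <= C * exp (- (al * g) * (s - a)) * maxnorm n (x a).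
Proof.
  intros Ha Hab Hg Hstable Hcont Hderiv s Hs.
  set (U := g * (s - a)).
  assert (HU : 0 <= U) by (unfold U; apply Rmult_le_pos; lra).
  assert (HaU : a + U / g = s) by (unfold U; field; lra).
  assert (Hsol : is_solution n (fun _ => A) (glued n A x a g U)).
  { apply glued_solution; try assumption.
    rewrite HaU. intros i Hi t Ht. apply Hderiv; [exact Hi|lra]. }
  specialize (Hstable _ Hsol U HU).
  replace (- (al * g) * (s - a)) with (- al * U) by (unfold U; ring).
  rewrite (maxnorm_ext n (x s) (glued n A x a g U U)), (maxnorm_ext n (x a) (glued n A x a g U 0));
    [exact Hstable| |]; intros j Hj; unfold glued.
  - destruct (Rlt_dec 0 U) as [|HU0].
    + unfold Rdiv. rewrite Rmult_0_l, Rplus_0_r. reflexivity.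
    + assert (U = 0) as -> by lra. rewrite Rminus_0_r, expmv_0.
      unfold Rdiv. rewrite Rmult_0_l, Rplus_0_r. reflexivity.
  - destruct (Rlt_dec U U); [lra|]. rewrite Rminus_diag, expmv_0, HaU. reflexivity.
Qed.

(** * Dwell-time switching *)

Lemma stable_with_mono n A C al C' al' :
  0 <= C <= C' -> al' <= al -> stable_with n A C al -> stable_with n A C' al'.
Proof.
  intros HC Hal Hst y Hy t Ht. eapply Rle_trans; [now apply Hst|].
  apply Rmult_le_compat_r; [apply maxnorm_ge0|].
  apply Rmult_le_compat; [lra|left; apply exp_pos|lra|apply exp_le_compat; nra].
Qed.

Lemma stable_with_uniform n p (M : nat -> mat) :
  (forall q, (1 <= q <= p)%nat -> exp_stable n (M q)) ->
  exists C al, 0 < C /\ 0 < al /\ forall q, (1 <= q <= p)%nat -> stable_with n (M q) C al.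
Proof.
  induction p as [|p IH]; intros HM.
  - exists 1, 1. repeat split; [lra|lra|]. intros q Hq. lia.
  - destruct IH as [C1 [al1 [HC1 [Hal1 Hst1]]]]; [intros; apply HM; lia|].
    destruct (HM (S p) ltac:(lia)) as [C2 [al2 [HC2 [Hal2 Hst2]]]].
    exists (Rmax C1 C2), (Rmin al1 al2).
    split; [eapply Rlt_le_trans; [exact HC1|apply Rmax_l]|split; [now apply Rmin_pos|]].
    intros q Hq. destruct (Nat.eq_dec q (S p)) as [->|Hne].
    + apply (stable_with_mono _ _ C2 al2); [split; [lra|apply Rmax_r]|apply Rmin_r|exact Hst2].
    + apply (stable_with_mono _ _ C1 al1); [split; [lra|apply Rmax_l]|apply Rmin_l|].
      apply Hst1. lia.
Qed.

Lemma high_gain_absorbs_overshoot C al tauD lam :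
  0 < C -> 0 < al -> 0 < tauD -> 0 < lam ->
  exists g0, 0 < g0 /\ forall g, g0 <= g ->
    lam <= al * g /\ forall L, tauD <= L -> C * exp (- (al * g) * L) <= exp (- lam * L).
Proof.
  intros HC Hal Htau Hlam.
  set (r := Rabs (ln C) / tauD).
  assert (Hr : 0 <= r) by (apply Rdiv_le_0_compat; [apply Rabs_pos|lra]).
  exists ((lam + r) / al). split; [apply Rdiv_lt_0_compat; lra|]. intros g Hg.
  assert (Hag : lam + r <= al * g).
  { apply Rmult_le_compat_l with (r := al) in Hg; [|lra].
    replace (al * ((lam + r) / al)) with (lam + r) in Hg by (field; lra). exact Hg. }
  split; [lra|]. intros L HL.
  rewrite <- (exp_ln C) at 1 by exact HC. rewrite <- exp_plus. apply exp_le_compat.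
  assert (Hlog : ln C <= r * tauD).
  { unfold r, Rdiv. rewrite Rmult_assoc, Rinv_l, Rmult_1_r by lra. apply Rle_abs. }
  assert (r * tauD <= r * L) by (apply Rmult_le_compat_l; lra).
  assert (r * L <= (al * g - lam) * L) by (apply Rmult_le_compat_r; lra).
  lra.
Qed.

Section DwellTime.

Variables (tk : nat -> R) (tauD : R).
Hypotheses (Htau : 0 < tauD) (Htk0 : tk O = 0) (Hstep : forall k, tk (S k) - tk k >= tauD).

Lemma dwell_times_ge k : INR k * tauD <= tk k.
Proof.
  induction k as [|k IH]; [rewrite Htk0; simpl; lra|].
  rewrite S_INR. generalize (Hstep k). lra.
Qed.

Lemma dwell_times_ge0 k : 0 <= tk k.
Proof. generalize (dwell_times_ge k) (pos_INR k). nra. Qed.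

Lemma dwell_interval_exists t : 0 <= t -> exists k, tk k <= t < tk (S k).
Proof.
  intros Ht. destruct (INR_unbounded (t / tauD)) as [K HK].
  assert (HtK : t < tk K).
  { eapply Rlt_le_trans; [|apply dwell_times_ge].
    apply Rmult_lt_reg_r with (/ tauD); [now apply Rinv_0_lt_compat|].
    rewrite Rmult_assoc, Rinv_r, Rmult_1_r by lra. exact HK. }
  clear HK. induction K as [|K IH]; [lra|].
  destruct (Rlt_dec t (tk K)) as [Hlt|Hge]; [now apply IH|]. exists K. lra.
Qed.

Lemma dwell_time_decay (f : R -> R) C beta lam :
  0 <= C -> lam <= beta -> (forall t, 0 <= f t) ->
  (forall L, tauD <= L -> C * exp (- beta * L) <= exp (- lam * L)) ->
  (forall k s, tk k <= s <= tk (S k) -> f s <= C * exp (- beta * (s - tk k)) * f (tk k)) ->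
  forall t, 0 <= t -> f t <= C * exp (- lam * t) * f 0.
Proof.
  intros HC Hlam Hf Habsorb Hpiece.
  assert (Hswitch : forall k, f (tk k) <= exp (- lam * tk k) * f 0).
  { induction k as [|k IH]; [rewrite Htk0, Rmult_0_r, exp_0; lra|].
    eapply Rle_trans; [apply (Hpiece k); generalize (Hstep k); lra|].
    eapply Rle_trans.
    { apply Rmult_le_compat_l; [|exact IH].
      apply Rmult_le_pos; [exact HC|left; apply exp_pos]. }
    rewrite <- Rmult_assoc. apply Rmult_le_compat_r; [apply Hf|].
    replace (- lam * tk (S k)) with (- lam * (tk (S k) - tk k) + - lam * tk k) by ring.
    rewrite exp_plus. apply Rmult_le_compat_r; [left; apply exp_pos|].
    apply Habsorb. generalize (Hstep k). lra. }
  intros t Ht. destruct (dwell_interval_exists t Ht) as [k Hk].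
  eapply Rle_trans; [apply (Hpiece k); lra|].
  eapply Rle_trans.
  { apply Rmult_le_compat; [|apply Hf| |exact (Hswitch k)].
    - apply Rmult_le_pos; [exact HC|left; apply exp_pos].
    - apply Rmult_le_compat_l; [exact HC|]. apply exp_le_compat with (y := - lam * (t - tk k)).
      nra. }
  replace (- lam * t) with (- lam * (t - tk k) + - lam * tk k) by ring.
  rewrite exp_plus. lra.
Qed.

End DwellTime.

Lemma mulmv_scalemx n g A v i : mulmv n (scalemx g A) v i = g * mulmv n A v i.
Proof. unfold mulmv, scalemx. rewrite <- sumR_mult_l. apply sumR_ext. intros; ring. Qed.

Lemma switched_maxnorm_decay n p (M : nat -> mat) C al tauD lam g sigma (x : R -> vec) :
  0 < tauD -> 0 < g -> 0 <= C -> lam <= al * g ->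
  (forall q, (1 <= q <= p)%nat -> stable_with n (M q) C al) ->
  (forall L, tauD <= L -> C * exp (- (al * g) * L) <= exp (- lam * L)) ->
  dwell_signal tauD p sigma ->
  is_solution n (fun t => scalemx g (M (sigma t))) x ->
  forall t, 0 <= t -> maxnorm n (x t) <= C * exp (- lam * t) * maxnorm n (x 0).
Proof.
  intros Htau Hg HC Hlam Hstable Habsorb [Hsig [tk [Htk0 [Hstep Hconst]]]] Hx t Ht.
  apply (dwell_time_decay tk tauD Htau Htk0 Hstep (fun s => maxnorm n (x s)) C (al * g) lam);
    [exact HC|exact Hlam|intros; apply maxnorm_ge0|exact Habsorb| |exact Ht].
  intros k s Hs. assert (Hk := dwell_times_ge0 tk tauD Htau Htk0 Hstep k).
  apply (maxnorm_decay_on_interval n (M (sigma (tk k))) C al x (tk k) (tk (S k)) g);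
    [exact Hk|generalize (Hstep k); lra|exact Hg|apply Hstable, Hsig, Hk| | |exact Hs].
  - intros i Hi. apply (Hx i Hi).
  - intros i Hi u Hu. rewrite <- (Hconst k u Hu), <- mulmv_scalemx. apply (Hx i Hi). lra.
Qed.

Lemma norm_le_of_maxnorm_le n N D k v w :
  is_norm n N -> 0 <= k -> (forall v, maxnorm n v <= D * N v) ->
  maxnorm n v <= k * maxnorm n w -> N v <= unit_norm_sum n N * D * k * N w.
Proof.
  intros HN Hk HD Hvw.
  eapply Rle_trans; [apply (norm_le_maxnorm n N HN)|].
  replace (unit_norm_sum n N * D * k * N w) with (unit_norm_sum n N * (k * (D * N w))) by ring.
  apply Rmult_le_compat_l; [apply (unit_norm_sum_ge0 n N HN)|].
  eapply Rle_trans; [exact Hvw|]. apply Rmult_le_compat_l; [exact Hk|apply HD].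
Qed.

Theorem lemma1 (n p : nat) (M : nat -> mat) (N : vec -> R) :
  is_norm n N ->
  (forall q, (1 <= q <= p)%nat -> exp_stable n (M q)) ->
  forall tauD lam, 0 < tauD -> 0 < lam ->
  exists g0, 0 < g0 /\
    forall g, g0 <= g ->
    exists c, 0 < c /\
      forall sigma, dwell_signal tauD p sigma ->
      forall x : R -> vec,
        is_solution n (fun t => scalemx g (M (sigma t))) x ->
        forall t, 0 <= t -> N (x t) <= c * exp (- lam * t) * N (x 0).
Proof.
  intros HN HM tauD lam Htau Hlam.
  destruct (stable_with_uniform n p M HM) as [C [al [HC [Hal Hstable]]]].
  destruct (maxnorm_le_norm n N HN) as [D [HD HmaxN]].
  destruct (high_gain_absorbs_overshoot C al tauD lam HC Hal Htau Hlam) as [g0 [Hg0 Hgain]].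
  exists g0. split; [exact Hg0|]. intros g Hg. destruct (Hgain g Hg) as [Hlam_le Habsorb].
  set (E := unit_norm_sum n N). assert (HE : 0 <= E) by apply (unit_norm_sum_ge0 n N HN).
  assert (HECD : 0 <= E * D * C) by (apply Rmult_le_pos; nra).
  exists (E * D * C + 1). split; [lra|]. intros sigma Hsigma x Hx t Ht.
  assert (Hexp := exp_pos (- lam * t)). assert (HN0 := norm_ge0 n N HN (x 0)).
  eapply Rle_trans.
  { apply (norm_le_of_maxnorm_le n N D (C * exp (- lam * t))); [exact HN|nra|exact HmaxN|].
    apply (switched_maxnorm_decay n p M C al tauD lam g sigma);
      try assumption; lra. }
  fold E. assert (0 <= exp (- lam * t) * N (x 0)) by nra. nra.
Qed.
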